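(* If $A$ is an $m$-dimensional permutation array of size $n_1\times\cdots\times n_m$ and odd order $n$, then there is an $n_1\times\cdots\times n_m$ window in the periodic extension of $A$ which has a repeated difference vector. In particular, no $m$-dimensional Costas array of odd order is periodic Costas.
   Context: For $n\in\mathbb{N}$, $[n]=\{1,\dots,n\}$; $m\ge2$, all $n_i\ge2$. A binary array $A:[n_1]\times\cdots\times[n_m]\to\{0,1\}$ is an $m$-dimensional permutation array if there exist $k$ with $1\le k<m$ and a bijection $\varphi:[n_1]\times\cdots\times[n_k]\to[n_{k+1}]\times\cdots\times[n_m]$ with $A(a_1,\dots,a_m)=1$ iff $\varphi(a_1,\dots,a_k)=(a_{k+1},\dots,a_m)$; points with value 1 are dots; order $n=n_1\cdots n_k$. The periodic extension $\mathbb{A}:\mathbb{Z}^m\to\{0,1\}$ is $\mathbb{A}(a_1,\dots,a_m)=A(a_1',\dots,a_m')$ with $a_i'\in[n_i]$, $a_i'\equiv a_i\pmod{n_i}$; an $n_1\times\cdots\times n_m$ window is the restriction of $\mathbb{A}$ to a box $\prod_i\{k_i,\dots,k_i+n_i-1\}$. The difference vector from dot $(a_i)$ to distinct dot $(w_i)$ is $\langle w_i-a_i\rangle_i$; a window has a repeated difference vector if two distinct ordered pairs of distinct dots in it have equal difference vectors. An $m$-dimensional Costas array is a permutation array with no repeated difference vector; it is periodic Costas if every $n_1\times\cdots\times n_m$ window of its periodic extension has no repeated difference vector. *)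

From mathcomp Require Import all_boot all_order all_algebra.
Set Implicit Arguments. Unset Strict Implicit. Unset Printing Implicit Defensive.
Import Order.TTheory GRing.Theory Num.Theory.

(* Coordinates are 0-based: [n_i] = {1..n_i} is represented by {0..n_i-1}.
   A point of the box is a finite function 'I_m -> nat, a point of Z^m a
   finite function 'I_m -> int. *)

Section Defs.
Variable m : nat.
Variable n : 'I_m -> nat.
Notation pt := {ffun 'I_m -> nat}.
Notation zpt := {ffun 'I_m -> int}.

Definition inbox (a : pt) : Prop := forall i, a i < n i.

(* points of [n_1] x ... x [n_k], stored in coordinates < k (others are 0) *)
Definition lowbox (k : nat) (x : pt) : Prop :=
  forall i : 'I_m, if (i < k)%N then x i < n i else x i == 0%N.
(* points of [n_{k+1}] x ... x [n_m], stored in coordinates >= k *)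
Definition highbox (k : nat) (y : pt) : Prop :=
  forall i : 'I_m, if (i < k)%N then y i == 0%N else y i < n i.

Definition lowpart (k : nat) (a : pt) : pt := [ffun i : 'I_m => if (i < k)%N then a i else 0%N].
Definition highpart (k : nat) (a : pt) : pt := [ffun i : 'I_m => if (i < k)%N then 0%N else a i].

Definition perm_array_wrt (k : nat) (A : pt -> bool) : Prop :=
  (0 < k < m)%N /\
  exists phi : pt -> pt,
    (forall x, lowbox k x -> highbox k (phi x)) /\
    (forall x y, lowbox k x -> lowbox k y -> phi x = phi y -> x = y) /\
    (forall y, highbox k y -> exists x, lowbox k x /\ phi x = y) /\
    (forall a, inbox a -> (A a <-> phi (lowpart k a) = highpart k a)).

Definition perm_array (A : pt -> bool) : Prop := exists k, perm_array_wrt k A.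

Definition perm_order (k : nat) : nat := (\prod_(i < m | (i < k)%N) n i)%N.

Definition pext (A : pt -> bool) (z : zpt) : bool :=
  A [ffun i : 'I_m => `|((z i) %% (n i)%:Z)%Z|%N].

Definition in_window (c z : zpt) : Prop :=
  forall i, ((c i <= z i) /\ (z i <= c i + (n i)%:Z - 1))%R.

Definition rep_dv (D : zpt -> Prop) : Prop :=
  exists a w a' w' : zpt,
    [/\ D a, D w, D a' & D w'] /\ a != w /\ a' != w' /\ (a, w) != (a', w') /\
    forall i, (w i - a i = w' i - a' i)%R.

Definition window_dots (A : pt -> bool) (c : zpt) : zpt -> Prop :=
  fun z => in_window c z /\ pext A z.

Definition array_dots (A : pt -> bool) : zpt -> Prop :=
  fun z => (forall i, ((0 <= z i) /\ (z i < (n i)%:Z))%R) /\ A [ffun i : 'I_m => `|z i|%N].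

Definition costas (A : pt -> bool) : Prop := perm_array A /\ ~ rep_dv (array_dots A).

Definition periodic_costas (A : pt -> bool) : Prop :=
  perm_array A /\ forall c : zpt, ~ rep_dv (window_dots A c).

End Defs.

From mathcomp Require Import all_boot all_order all_algebra zify.
Set Implicit Arguments. Unset Strict Implicit. Unset Printing Implicit Defensive.
Import Order.TTheory GRing.Theory Num.Theory.

(* Write the dots of A as (x, phi x) with x in the low box.  Stepping x
   cyclically along a low coordinate j displaces phi x by phi_step x, read
   modulo n in the high coordinates; phi_step x is never 0 because phi is
   injective.  The order is odd and phi is a bijection, so both boxes have the
   same odd size: every n_i is odd, and phi_step, which misses 0 in the high
   box, must collide at some x != x'.  The two dot pairs based at x and x' then
   have difference vectors congruent modulo n.  Because n_i is odd, choosing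
   the representatives of least absolute value (at most (n_i - 1)/2) lifts the
   four dots into a single window of the periodic extension, where the two
   difference vectors become equal. *)

Section BoxCounting.
Variable m : nat.
Local Notation pt := {ffun 'I_m -> nat}.
Implicit Types (b : 'I_m -> nat) (f : pt -> pt).

Definition box_enum b : seq pt :=
  [seq [ffun i => val (p i)] | p : {dffun forall i, 'I_(b i)}
                               <- enum {: {dffun forall i, 'I_(b i)}}].

Lemma box_enumP b x : reflect (inbox b x) (x \in box_enum b).
Proof.
apply: (iffP mapP) => [[p _ ->] i | xb]; first by rewrite ffunE ltn_ord.
exists (finfun (fun i => Ordinal (xb i) : 'I_(b i))); first by rewrite mem_enum.
by apply/ffunP => i; rewrite !ffunE.
Qed.

Lemma box_enum_uniq b : uniq (box_enum b).
Proof.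
rewrite map_inj_uniq ?enum_uniq // => p q /ffunP epq.
by apply/ffunP => i; apply: val_inj; have := epq i; rewrite !ffunE.
Qed.

Lemma size_box_enum b : size (box_enum b) = (\prod_i b i)%N.
Proof.
rewrite size_map -cardE card_dep_ffun foldrE big_map big_enum /=.
by apply: eq_bigr => i _; rewrite card_ord.
Qed.

Lemma prod_box_le_of_inj b b' f :
  (forall x, inbox b x -> inbox b' (f x)) ->
  (forall x y, inbox b x -> inbox b y -> f x = f y -> x = y) ->
  (\prod_i b i <= \prod_i b' i)%N.
Proof.
move=> fb finj; rewrite -!size_box_enum -(size_map f).
apply: uniq_leq_size => [|_ /mapP[x /box_enumP xb ->]]; last exact/box_enumP/fb.
rewrite map_inj_in_uniq ?box_enum_uniq // => x y /box_enumP xb /box_enumP yb.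
exact: finj.
Qed.

Lemma prod_box_le_of_onto b b' f :
  (forall y, inbox b' y -> exists2 x, inbox b x & f x = y) ->
  (\prod_i b' i <= \prod_i b i)%N.
Proof.
move=> fonto; rewrite -!size_box_enum -(size_map f (box_enum b)).
apply: uniq_leq_size (box_enum_uniq b') _ => y /box_enumP /fonto[x xb <-].
exact/map_f/box_enumP.
Qed.

Lemma box_pigeonhole b b' f y0 :
  (forall x, inbox b x -> inbox b' (f x)) -> inbox b' y0 ->
  (forall x, inbox b x -> f x != y0) ->
  (\prod_i b' i <= \prod_i b i)%N ->
  exists x y, [/\ inbox b x, inbox b y, x != y & f x = f y].
Proof.
move=> fb y0b fy0 le_b'b.
have /(uniqPn y0)[i [j [lt_ij lt_j e]]] : ~~ uniq (map f (box_enum b)).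
  apply: contraTN le_b'b => uniq_fb.
  rewrite -ltnNge -!size_box_enum -(size_map f (box_enum b)).
  apply: (uniq_leq_size (s1 := y0 :: _)) => [|_ /predU1P[-> | /mapP[x /box_enumP xb ->]]].
  - rewrite /= uniq_fb andbT; apply/mapP => -[x /box_enumP xb y0E].
    by move: (fy0 x xb); rewrite y0E eqxx.
  - exact/box_enumP.
  - exact/box_enumP/fb.
rewrite size_map in lt_j; have lt_i := ltn_trans lt_ij lt_j.
exists (nth y0 (box_enum b) i), (nth y0 (box_enum b) j); split.
- exact/box_enumP/mem_nth.
- exact/box_enumP/mem_nth.
- by rewrite nth_uniq ?box_enum_uniq // ltn_eqF.
- by rewrite -!(nth_map y0 y0 f).
Qed.

End BoxCounting.

Section CenteredResidues.
Local Open Scope ring_scope.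

Definition centered_mod (N : nat) (t : int) : int :=
  let r := (t %% N)%Z in if r <= (N./2)%:Z then r else r - N%:Z.

Lemma centered_modE N t : (centered_mod N t = t %[mod N])%Z.
Proof.
rewrite /centered_mod; case: ifP => _; first exact: modz_mod.
by rewrite -(modzMDl 1) mul1r addrC subrK modz_mod.
Qed.

Lemma centered_mod_bound N t : (0 < N)%N -> `|centered_mod N t| <= (N./2)%:Z.
Proof.
move=> N_gt0; have := modz_ge0 t (d := N); have := ltz_pmod t (d := N).
by rewrite /centered_mod; case: ifP; lia.
Qed.

Lemma parallelogram_in_interval (N : nat) (p d r : int) :
  odd N -> `|d| <= (N./2)%:Z -> `|r| <= (N./2)%:Z ->
  let c := p + Num.min d 0 + Num.min r 0 in
  {in [:: p; p + d; p + r; p + r + d], forall x, c <= x <= c + N%:Z - 1}.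
Proof.
move=> oddN d_le r_le c x; have := odd_double_half N; rewrite oddN /c.
by rewrite !inE => N_eq /or4P[] /eqP ->; lia.
Qed.

End CenteredResidues.

Section OddPeriodicWindows.
Local Open Scope ring_scope.
Variables (m : nat) (n : 'I_m -> nat) (A : {ffun 'I_m -> nat} -> bool).
Local Notation pt := {ffun 'I_m -> nat}.
Local Notation zpt := {ffun 'I_m -> int}.
Hypothesis n_odd : forall i, odd (n i).

Definition modpt (z : zpt) : pt := [ffun i => `|(z i %% (n i)%:Z)%Z|%N].

Lemma modpt_lift (z : zpt) (y : pt) :
  inbox n y -> (forall i, (z i = (y i)%:Z %[mod n i])%Z) -> modpt z = y.
Proof.
move=> yb zy; apply/ffunP => i; rewrite ffunE zy modz_small ?absz_nat //.
by rewrite ltz_nat yb.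
Qed.

Variables a w a' w' : pt.
Hypotheses (a_box : inbox n a) (w_box : inbox n w) (a'_box : inbox n a') (w'_box : inbox n w').
Hypotheses (a_dot : A a) (w_dot : A w) (a'_dot : A a') (w'_dot : A w').
Hypotheses (a_neq_w : a != w) (a'_neq_w' : a' != w') (aw_neq_a'w' : (a, w) != (a', w')).
Hypothesis diff_congr :
  forall i, ((w i)%:Z - (a i)%:Z = (w' i)%:Z - (a' i)%:Z %[mod n i])%Z.

Let d i := centered_mod (n i) ((w i)%:Z - (a i)%:Z).
Let r i := centered_mod (n i) ((a' i)%:Z - (a i)%:Z).
Let lift_a : zpt := [ffun i => (a i)%:Z].
Let lift_w : zpt := [ffun i => (a i)%:Z + d i].
Let lift_a' : zpt := [ffun i => (a i)%:Z + r i].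
Let lift_w' : zpt := [ffun i => (a i)%:Z + r i + d i].
Let corner : zpt := [ffun i => (a i)%:Z + Num.min (d i) 0 + Num.min (r i) 0].

Let lift_aK : modpt lift_a = a.
Proof. by apply: modpt_lift => // i; rewrite ffunE. Qed.

Let lift_wK : modpt lift_w = w.
Proof.
by apply: modpt_lift => // i; rewrite ffunE -modzDmr centered_modE modzDmr subrKC.
Qed.

Let lift_a'_congr i : (lift_a' i = a' i %[mod n i])%Z.
Proof. by rewrite ffunE -modzDmr centered_modE modzDmr subrKC. Qed.

Let lift_a'K : modpt lift_a' = a'.
Proof. exact: modpt_lift a'_box lift_a'_congr. Qed.

Let lift_w'K : modpt lift_w' = w'.
Proof.
apply: modpt_lift => // i; have := lift_a'_congr i; rewrite !ffunE => a'_congr.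
by rewrite -modzDm a'_congr centered_modE diff_congr modzDm subrKC.
Qed.

Let lifts_in_window z :
  z \in [:: lift_a; lift_w; lift_a'; lift_w'] -> in_window n corner z.
Proof.
move=> z_lift i; have n_gt0 : (0 < n i)%N by rewrite odd_gt0.
have zi_in : z i \in [:: (a i)%:Z; (a i)%:Z + d i; (a i)%:Z + r i; (a i)%:Z + r i + d i].
  by move: z_lift; rewrite !inE => /or4P[] /eqP ->; rewrite ffunE eqxx ?orbT.
have /andP[lo hi] := parallelogram_in_interval (n_odd i)
  (centered_mod_bound _ n_gt0) (centered_mod_bound _ n_gt0) zi_in.
by split; rewrite ffunE.
Qed.

Lemma odd_window_rep_dv : exists c, rep_dv (window_dots n A c).
Proof.
have dot z : z \in [:: lift_a; lift_w; lift_a'; lift_w'] -> A (modpt z) ->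
    window_dots n A corner z.
  by move=> z_lift; split; [exact: lifts_in_window | ].
exists corner, lift_a, lift_w, lift_a', lift_w'; split; [split | split; [|split; [|split]]].
- by apply: dot; rewrite ?inE ?eqxx ?orbT ?lift_aK.
- by apply: dot; rewrite ?inE ?eqxx ?orbT ?lift_wK.
- by apply: dot; rewrite ?inE ?eqxx ?orbT ?lift_a'K.
- by apply: dot; rewrite ?inE ?eqxx ?orbT ?lift_w'K.
- by apply: (contraNneq _ a_neq_w) => /(congr1 modpt); rewrite lift_aK lift_wK => ->.
- by apply: (contraNneq _ a'_neq_w') => /(congr1 modpt); rewrite lift_a'K lift_w'K => ->.
- apply: (contraNneq _ aw_neq_a'w') => -[/(congr1 modpt) + /(congr1 modpt)].
  by rewrite lift_aK lift_wK lift_a'K lift_w'K => -> ->.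
- by move=> i; rewrite !ffunE; lia.
Qed.

End OddPeriodicWindows.

Lemma succ_modn_neq x N : 1 < N -> x < N -> x.+1 %% N != x.
Proof.
move=> N_gt1; rewrite leq_eqVlt => /predU1P[eN | lt]; last by rewrite modn_small ?gtn_eqF.
by rewrite eN modnn; lia.
Qed.

Section PermutationArray.
Variables (m : nat) (n : 'I_m -> nat) (A : {ffun 'I_m -> nat} -> bool).
Variables (k : nat) (phi : {ffun 'I_m -> nat} -> {ffun 'I_m -> nat}).
Local Notation pt := {ffun 'I_m -> nat}.
Local Notation lowbox := (lowbox n k).
Local Notation highbox := (highbox n k).
Implicit Types (x y : pt) (i : 'I_m).
Hypothesis n_gt1 : forall i, 1 < n i.
Hypothesis phi_high : forall x, lowbox x -> highbox (phi x).
Hypothesis phi_inj : forall x y, lowbox x -> lowbox y -> phi x = phi y -> x = y.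
Hypothesis phi_onto : forall y, highbox y -> exists x, lowbox x /\ phi x = y.
Hypothesis A_graph : forall a, inbox n a -> (A a <-> phi (lowpart k a) = highpart k a).

Definition lowdims (i : 'I_m) := if i < k then n i else 1.
Definition highdims (i : 'I_m) := if i < k then 1 else n i.

Lemma lowbox_inbox x : lowbox x <-> inbox lowdims x.
Proof.
by split=> xb i; move: (xb i); rewrite /lowdims; case: ifP => // _; rewrite ltnS leqn0.
Qed.

Lemma highbox_inbox y : highbox y <-> inbox highdims y.
Proof.
by split=> yb i; move: (yb i); rewrite /highdims; case: ifP => // _; rewrite ltnS leqn0.
Qed.

Lemma phi_coordE x i : lowbox x -> phi x i = if i < k then 0 else phi x i.
Proof. by move=> /phi_high/(_ i); case: ifP => // _ /eqP. Qed.

Definition graph_pt x : pt := [ffun i : 'I_m => if i < k then x i else phi x i].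

Lemma graph_pt_inbox x : lowbox x -> inbox n (graph_pt x).
Proof.
move=> xb i; rewrite ffunE; have := xb i; have := phi_high xb i.
by case: ifP.
Qed.

Lemma lowpart_graph_pt x : lowbox x -> lowpart k (graph_pt x) = x.
Proof.
by move=> xb; apply/ffunP => i; rewrite !ffunE; have := xb i; case: ifP => // _ /eqP.
Qed.

Lemma graph_pt_in_array x : lowbox x -> A (graph_pt x).
Proof.
move=> xb; apply/(A_graph (graph_pt_inbox xb)); rewrite lowpart_graph_pt //.
by apply/ffunP => i; rewrite !ffunE (phi_coordE i xb); case: ifP.
Qed.

Lemma prod_highdims : \prod_i highdims i = \prod_i lowdims i.
Proof.
apply/eqP; rewrite eqn_leq; apply/andP; split.
  apply: (prod_box_le_of_onto (f := phi)) => y /highbox_inbox/phi_onto[x [xb <-]].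
  by exists x => //; apply/lowbox_inbox.
apply: (prod_box_le_of_inj (f := phi)) => [x /lowbox_inbox/phi_high/highbox_inbox //|].
by move=> x y /lowbox_inbox xb /lowbox_inbox yb; apply: phi_inj.
Qed.

Lemma dims_odd : odd (\prod_i lowdims i) -> forall i, odd (n i).
Proof.
have odd_factor (b : 'I_m -> nat) i : odd (\prod_i b i) -> odd (b i).
  by rewrite (bigD1 i) //= oddM => /andP[].
move=> odd_low i; have odd_high : odd (\prod_i highdims i) by rewrite prod_highdims.
move: (odd_factor _ i odd_low) (odd_factor _ i odd_high).
by rewrite /lowdims /highdims; case: ifP.
Qed.

Lemma graph_pt_inj x y : lowbox x -> lowbox y -> graph_pt x = graph_pt y -> x = y.
Proof. by move=> xb yb /(congr1 (lowpart k)); rewrite !lowpart_graph_pt. Qed.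

Variable j : 'I_m.
Hypothesis j_low : j < k.

Definition shift x : pt := [ffun i : 'I_m => if i == j then (x i).+1 %% n i else x i].

Lemma shift_lowbox x : lowbox x -> lowbox (shift x).
Proof.
move=> xb i; rewrite ffunE; case: eqP => [-> | _]; last exact: xb.
by rewrite j_low ltn_mod (ltn_trans _ (n_gt1 j)).
Qed.

Lemma shift_neq x : lowbox x -> shift x != x.
Proof.
move=> xb; apply/eqP => /(congr1 (fun y => y j)); rewrite ffunE eqxx; apply/eqP.
by apply: succ_modn_neq; [exact: n_gt1 | have := xb j; rewrite j_low].
Qed.

Local Open Scope ring_scope.

Definition phi_step x : pt :=
  [ffun i : 'I_m => if (i < k)%N then 0%N
                    else `|(((phi (shift x) i)%:Z - (phi x i)%:Z) %% (n i)%:Z)%Z|%N].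

Lemma phi_step_highbox x : highbox (phi_step x).
Proof.
move=> i; rewrite ffunE; case: (i < k)%N => //.
have n_gt0 : 0 < (n i)%:Z by rewrite ltz_nat (ltn_trans _ (n_gt1 i)).
set t := (_ - _)%R; have := ltz_pmod t n_gt0; have := modz_ge0 t (lt0r_neq0 n_gt0); lia.
Qed.

Lemma phi_step_neq0 x : lowbox x -> phi_step x != [ffun => 0%N].
Proof.
move=> xb; have sxb := shift_lowbox xb.
apply: contra_neq (shift_neq xb) => /ffunP step0; apply: phi_inj => //.
apply/ffunP => i; rewrite (phi_coordE i xb) (phi_coordE i sxb).
case: ifP => // i_high; have := step0 i; rewrite !ffunE i_high => /eqP.
rewrite absz_eq0 => /eqP/dvdz_mod0P; rewrite -eqz_mod_dvd.
have := phi_high xb i; have := phi_high sxb i; rewrite i_high => lt_s lt_x.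
by rewrite !modz_small ?ltz_nat // => /eqP [].
Qed.

Lemma graph_pt_shift_congr x i : lowbox x ->
  ((graph_pt (shift x) i)%:Z - (graph_pt x i)%:Z
     = (if (i < k)%N then (i == j : nat)%:Z else (phi_step x i)%:Z) %[mod n i])%Z.
Proof.
move=> xb; rewrite !ffunE; case: ifP => i_low.
  case: eqP => [-> | _]; last by rewrite subrr.
  by rewrite -modz_nat modzDml intS addrK.
have n_neq0 : (n i)%:Z != 0 by rewrite eqz_nat -lt0n (ltn_trans _ (n_gt1 i)).
by rewrite gez0_abs ?modz_ge0 // modz_mod.
Qed.

Lemma phi_step_collision :
  exists x x', [/\ lowbox x, lowbox x', x != x' & phi_step x = phi_step x'].
Proof.
have zero_high : inbox highdims [ffun => 0%N].
  by move=> i; rewrite ffunE /highdims; case: ifP => // _; apply: ltn_trans (n_gt1 i).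
have step_high x : inbox lowdims x -> inbox highdims (phi_step x).
  by move=> _; apply/highbox_inbox/phi_step_highbox.
have step_neq0 x : inbox lowdims x -> phi_step x != [ffun => 0%N].
  by move/lowbox_inbox; apply: phi_step_neq0.
have [x [x' [/lowbox_inbox xb /lowbox_inbox x'b x_neq_x' step_eq]]] :=
  box_pigeonhole step_high zero_high step_neq0 (eq_leq prod_highdims).
by exists x, x'.
Qed.

Lemma graph_pt_window_rep_dv :
  odd (\prod_i lowdims i) -> exists c, rep_dv (window_dots n A c).
Proof.
move=> /dims_odd n_odd; have [x [x' [xb x'b x_neq_x' step_eq]]] := phi_step_collision.
have sxb := shift_lowbox xb; have sx'b := shift_lowbox x'b.
apply: (@odd_window_rep_dv _ _ _ n_odd (graph_pt x) (graph_pt (shift x))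
          (graph_pt x') (graph_pt (shift x'))).
- exact: graph_pt_inbox xb.
- exact: graph_pt_inbox sxb.
- exact: graph_pt_inbox x'b.
- exact: graph_pt_inbox sx'b.
- exact: graph_pt_in_array xb.
- exact: graph_pt_in_array sxb.
- exact: graph_pt_in_array x'b.
- exact: graph_pt_in_array sx'b.
- by apply: contra_neq (shift_neq xb) => /esym/(graph_pt_inj sxb xb).
- by apply: contra_neq (shift_neq x'b) => /esym/(graph_pt_inj sx'b x'b).
- by apply: contra_neq x_neq_x' => -[/(graph_pt_inj xb x'b)].
- by move=> i; rewrite !graph_pt_shift_congr // step_eq.
Qed.

End PermutationArray.

Lemma perm_array_window_rep_dv m (n : 'I_m -> nat) (A : {ffun 'I_m -> nat} -> bool) k :
  (forall i, 1 < n i) -> perm_array_wrt n k A -> odd (perm_order n k) ->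
  exists c, rep_dv (window_dots n A c).
Proof.
move=> n_gt1 [/andP[k_gt0 k_lt_m] [phi [phi_high [phi_inj [phi_onto A_graph]]]]].
have j_low : Ordinal (ltn_trans k_gt0 k_lt_m) < k by [].
rewrite /perm_order big_mkcond.
exact: (graph_pt_window_rep_dv n_gt1 phi_high phi_inj phi_onto A_graph j_low).
Qed.

Theorem mainTheorem7 (m : nat) (n : 'I_m -> nat) (A : {ffun 'I_m -> nat} -> bool) :
  (2 <= m)%N -> (forall i, (2 <= n i)%N) ->
  (forall k, perm_array_wrt n k A -> odd (perm_order n k) ->
     exists c : {ffun 'I_m -> int}, rep_dv (window_dots n A c))
  /\
  (forall k, perm_array_wrt n k A -> odd (perm_order n k) ->
     costas n A -> ~ periodic_costas n A).
Proof.
move=> _ n_gt1; split=> k perm_A odd_order.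
- exact: perm_array_window_rep_dv n_gt1 perm_A odd_order.
- move=> _ [_ no_rep]; have [c rep_c] := perm_array_window_rep_dv n_gt1 perm_A odd_order.
  exact: no_rep rep_c.
Qed.
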